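(* Let $K,L,T,r$ be positive integers with $L\le K$ and $1\le r\le \min\{K,T\}$, and let $(\alpha,\beta)$ be the $\mathsf{GASP}_r$ exponent vectors (defined in the context). Then the number of distinct integers in the sumset $\operatorname{Set}(\alpha)+\operatorname{Set}(\beta)$ is \begin{multline*} N= KL+2K+3T-2 -\max\{K,\varphi\}+(L-2)\max\{0,\min\{r,r-\varphi\}\}+ \lfloor (T-1)/r \rfloor \min\{T-1,K-r\} \\ -\mathbf{1}_{\varphi < r}\Bigg(\min\{0,\mu-r\} +r(T-1-\mu)/K+\frac{-Kx^2 + (-K-2\max\{0,\varphi\}+2T-2)x+T-1-\mu}{2} -\frac{T-1-\mu}{K} \cdot \frac{T-1+\mu}{2}\Bigg), \end{multline*} where $\varphi = T-1-KL+2K$, $\mu$ is the integer with $0 \le \mu \le K-1$ and $\mu \equiv T-1 \pmod{K}$, and $x = \min\left\{ \frac{T-1-\mu}{K} -\mathbf{1}_{\mu=0}, L-3 \right\}$.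
   Context: For positive integers $K,L,T,r$ with $L\le K$ and $1\le r\le\min\{K,T\}$, the code $\mathsf{GASP}_r$ is given by the integer vectors $\alpha=(\alpha_{\mathrm p}\mid\alpha_{\mathrm s})$ and $\beta=(\beta_{\mathrm p}\mid\beta_{\mathrm s})$ (concatenations), where $\alpha_{\mathrm p}=(0,1,\ldots,K-1)$; $\alpha_{\mathrm s}$ is the vector of the $T$ smallest elements of the set $\{KL+j+Kt : 0\le j\le r-1,\ t\in\mathbb{Z}_{\ge 0}\}$ listed in increasing order, i.e. $(KL,KL+1,\ldots,KL+r-1,KL+K,\ldots,KL+K+r-1,\ldots)$ of length $T$; $\beta_{\mathrm p}=(0,K,2K,\ldots,K(L-1))$; $\beta_{\mathrm s}=(KL,KL+1,\ldots,KL+T-1)$. $\operatorname{Set}(v)$ denotes the set of entries of a vector $v$, and $A+B=\{a+b: a\in A,b\in B\}$. $\mathbf{1}_P$ is $1$ if $P$ holds and $0$ otherwise. *)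

From mathcomp Require Import all_boot all_order all_algebra.
Set Implicit Arguments.
Unset Strict Implicit.
Unset Printing Implicit Defensive.
Import Order.TTheory GRing.Theory Num.Theory.

Definition alpha_p (K : nat) : seq nat := iota 0 K.
(* i-th entry (i < T) of alpha_s: the T smallest elements of
   {KL + j + K t : 0 <= j <= r-1, t >= 0} in increasing order, i.e.
   KL, KL+1, ..., KL+r-1, KL+K, ..., KL+K+r-1, ... *)
Definition alpha_s (K L T r : nat) : seq nat :=
  [seq K * L + i %% r + K * (i %/ r) | i <- iota 0 T].
Definition beta_p (K L : nat) : seq nat := [seq K * i | i <- iota 0 L].
Definition beta_s (K L T : nat) : seq nat := iota (K * L) T.

Definition gasp_alpha (K L T r : nat) : seq nat := alpha_p K ++ alpha_s K L T r.
Definition gasp_beta (K L T : nat) : seq nat := beta_p K L ++ beta_s K L T.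

Definition sumset (a b : seq nat) : seq nat := undup [seq x + y | x <- a, y <- b].

Local Open Scope ring_scope.

Definition gasp_N (K L T r : nat) : rat :=
  let Kq : rat := K%:R in
  let Lq : rat := L%:R in
  let Tq : rat := T%:R in
  let rq : rat := r%:R in
  let phi : rat := Tq - 1 - Kq * Lq + 2 * Kq in
  let mu : nat := ((T - 1) %% K)%N in
  let muq : rat := mu%:R in
  let x : rat := Order.min ((Tq - 1 - muq) / Kq - (mu == 0%N)%:R) (Lq - 3) in
  Kq * Lq + 2 * Kq + 3 * Tq - 2 - Order.max Kq phi
  + (Lq - 2) * Order.max 0 (Order.min rq (rq - phi))
  + ((T - 1) %/ r)%N%:R * Order.min (Tq - 1) (Kq - rq)
  - (if phi < rq then 1 else 0) *
    ( Order.min 0 (muq - rq)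
      + rq * (Tq - 1 - muq) / Kq
      + (- Kq * x ^+ 2 + (- Kq - 2 * Order.max 0 phi + 2 * Tq - 2) * x
         + Tq - 1 - muq) / 2
      - (Tq - 1 - muq) / Kq * ((Tq - 1 + muq) / 2)).

From mathcomp Require Import all_boot all_order all_algebra.
From mathcomp Require Import zify ring lra.
Import Order.TTheory GRing.Theory Num.Theory.

(* Write the entries of alpha_s as K L + o i with o i = i %% r + K (i %/ r), i < T.
   Then Set(alpha_p) + Set(beta) is the interval [0, K L + K + T - 1), the part of
   Set(alpha_s) + Set(beta_p) below 2 K L consists of the n in [K L, 2 K L) with
   (n - K L) %% K < r, and everything else lies in 2 K L + W, where
   W = {o i + u | i, u < T} is Set(alpha_s) + Set(beta_s) shifted down by 2 K L.
   With t = (T - 1) %/ r, W is [0, K t + (T - 1) %% r + T) minus the numbers below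
   K t whose residue mod K is at least r + T - 1, so #|W| = 2 T - 1 + t minn (T - 1) (K - r).
   Counting residues in [K L, 2 K L) turns N into a piecewise linear expression in
   q = (T - 1) %/ K and mu = (T - 1) %% K, and matching it with the closed formula
   is a case analysis on L - q - 2 and on mu versus r. *)

Lemma size_undup_count (s : seq nat) b :
  all (fun x => x < b) s -> size (undup s) = count (mem s) (iota 0 b).
Proof.
move=> /allP s_lt_b; rewrite -size_filter; apply/perm_size/uniq_perm.
- exact: undup_uniq.
- by rewrite filter_uniq ?iota_uniq.
move=> x; rewrite mem_undup mem_filter mem_iota /=.
by case: (boolP (x \in s)) => //= /s_lt_b.
Qed.

Lemma count_iota_id (p : pred nat) m n :
  (forall i, m <= i < m + n -> p i) -> count p (iota m n) = n.
Proof.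
move=> p_in; rewrite -[RHS](size_iota m) -count_predT.
by apply: eq_in_count => i; rewrite mem_iota => /p_in ->.
Qed.

Lemma count_iota_shift (p : pred nat) m n :
  count p (iota m n) = count (fun i => p (m + i)) (iota 0 n).
Proof. by rewrite -[m]addn0 iotaDl count_map addn0. Qed.

Lemma count_iota_lt a n : count (fun m => m < a) (iota 0 n) = minn a n.
Proof.
elim: n => [|n IHn]; first by rewrite minn0.
by rewrite -addn1 iotaD count_cat IHn /=; lia.
Qed.

Lemma count_modn_lt K a q s : 0 < K -> s <= K ->
  count (fun m => m %% K < a) (iota 0 (q * K + s)) = q * minn a K + minn a s.
Proof.
move=> K_gt0 s_leK.
have block p t : t <= K -> count (fun m => m %% K < a) (iota (p * K) t) = minn a t.
  move=> t_leK; rewrite count_iota_shift -count_iota_lt.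
  apply: eq_in_count => m; rewrite mem_iota => /andP[_ m_lt].
  by rewrite /= modnMDl modn_small //; apply: leq_trans m_lt t_leK.
rewrite iotaD count_cat add0n block //; congr (_ + _).
elim: q => [|q IHq]; first by rewrite mul0n.
by rewrite mulSnr iotaD count_cat IHq add0n block // mulSnr.
Qed.

Lemma count_ltn_or (p : pred nat) c n : c <= n ->
  count (fun m => (m < c) || p m) (iota 0 n) + count p (iota 0 c)
  = c + count p (iota 0 n).
Proof.
move=> c_le_n; rewrite -(subnKC c_le_n) !iotaD !count_cat add0n.
have -> : count (fun m => (m < c) || p m) (iota 0 c) = c.
  by apply: count_iota_id => m /andP[_ ->].
have -> : count (fun m => (m < c) || p m) (iota c (n - c)) = count p (iota c (n - c)).
  by apply: eq_in_count => m; rewrite mem_iota => /andP[c_le_m _]; rewrite ltnNge c_le_m.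
lia.
Qed.

Lemma count_ltn_or_modn K L r c : 0 < K -> r <= K -> c <= L * K ->
  count (fun m => (m < c) || (m %% K < r)) (iota 0 (L * K))
  + (c %/ K * r + minn r (c %% K)) = c + L * r.
Proof.
move=> K_gt0 r_leK c_le.
have count_c : count (fun m => m %% K < r) (iota 0 c) = c %/ K * r + minn r (c %% K).
  by rewrite {1}(divn_eq c K) count_modn_lt ?(minn_idPl r_leK) // ltnW // ltn_pmod.
rewrite -count_c count_ltn_or // -[L * K]addn0 count_modn_lt // (minn_idPl r_leK).
by rewrite minn0 !addn0.
Qed.

Definition tail_bound K T r := K * ((T - 1) %/ r) + (T - 1) %% r + T.

Definition in_tail K T r w :=
  (w < tail_bound K T r) && (((T - 1) %/ r <= w %/ K) || (w %% K < r + T - 1)).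

Section Tail.

Variables K T r : nat.
Hypotheses (K_gt0 : 0 < K) (T_gt0 : 0 < T) (r_gt0 : 0 < r) (r_leK : r <= K).

Local Notation tl := ((T - 1) %/ r).
Local Notation rho := ((T - 1) %% r).

Lemma offset_divmod a b : a < r -> (b * r + a) %% r + K * ((b * r + a) %/ r) = a + K * b.
Proof. by move=> a_lt_r; rewrite modnMDl divnMDl // modn_small // divn_small // addn0. Qed.

Lemma in_tailP w :
  reflect (exists i u, [/\ i < T, u < T & w = i %% r + K * (i %/ r) + u]) (in_tail K T r w).
Proof.
have eT : T - 1 = tl * r + rho by rewrite -divn_eq.
have rho_lt_r : rho < r by rewrite ltn_pmod.
rewrite /in_tail /tail_bound.
apply: (iffP andP) => [[w_lt /orP w_mod] | [i [u [i_lt_T u_lt_T ->]]]].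
- case: (ltnP (w %/ K) tl) => w_div; last first.
    have w_ge : tl * K <= w by rewrite -leq_divRL.
    case: (leqP (w - K * tl) rho) => d_le.
    + exists (tl * r + (w - K * tl)), 0; rewrite offset_divmod; first split; lia.
    + exists (tl * r + rho), (w - K * tl - rho); rewrite offset_divmod; first split; lia.
  case: w_mod => [|w_mod]; first lia.
  have ew : w = w %/ K * K + w %% K by rewrite -divn_eq.
  have : (w %/ K).+1 * r <= tl * r by rewrite leq_mul2r w_div orbT.
  case: (ltnP (w %% K) r) => j_lt.
  + by exists (w %/ K * r + w %% K), 0; rewrite offset_divmod; first split; lia.
  + exists (w %/ K * r + r.-1), (w %% K - r.-1); rewrite offset_divmod; first split; lia.
- have ei : i = i %/ r * r + i %% r by rewrite -divn_eq.
  have a_lt_r : i %% r < r by rewrite ltn_pmod.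
  have b_le : i %/ r <= tl by rewrite leq_div2r //; lia.
  have off_le : i %% r + K * (i %/ r) <= K * tl + rho.
    case: (ltnP (i %/ r) tl) => b_lt.
      have : K * (i %/ r).+1 <= K * tl by rewrite leq_mul2l b_lt orbT.
      lia.
    have b_eq : i %/ r = tl by apply/eqP; rewrite eqn_leq b_le.
    have : tl * r + i %% r < T by rewrite -b_eq -ei.
    rewrite b_eq; lia.
  split; first lia.
  apply/orP; right.
  rewrite addnAC addnC [K * _]mulnC modnMDl; apply: leq_ltn_trans (leq_mod _ _) _; lia.
Qed.

Lemma count_in_tail :
  count (in_tail K T r) (iota 0 (tail_bound K T r)) = tl * minn (T - 1) (K - r) + (2 * T - 1).
Proof.
have eT : T - 1 = tl * r + rho by rewrite -divn_eq.
rewrite /tail_bound -addnA iotaD count_cat add0n.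
have -> : count (in_tail K T r) (iota (K * tl) (rho + T)) = rho + T.
  apply: count_iota_id => w /andP[w_ge w_lt].
  by rewrite /in_tail /tail_bound leq_divRL // [tl * K]mulnC w_ge orTb andbT -addnA w_lt.
have -> : count (in_tail K T r) (iota 0 (K * tl))
         = count (fun w => w %% K < r + T - 1) (iota 0 (tl * K + 0)).
  rewrite addn0 mulnC; apply: eq_in_count => w.
  rewrite mem_iota add0n /in_tail /tail_bound => /andP[_ w_lt].
  rewrite leq_divRL // [tl * K <= w]leqNgt w_lt /=.
  by have -> : w < K * tl + rho + T by lia.
rewrite count_modn_lt // minn0 addn0.
have -> : minn (r + T - 1) K = r + minn (T - 1) (K - r) by lia.
rewrite mulnDr; lia.
Qed.

End Tail.

Definition in_gasp_sumset K L T r n :=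
  [|| n < K * L + (K + T - 1),
      (K * L <= n < 2 * (K * L)) && ((n - K * L) %% K < r)
    | (2 * (K * L) <= n) && in_tail K T r (n - 2 * (K * L))].

Section Sumset.

Variables K L T r : nat.
Hypotheses (K_gt0 : 0 < K) (L_gt0 : 0 < L) (T_gt0 : 0 < T).
Hypotheses (r_gt0 : 0 < r) (r_leK : r <= K) (r_leT : r <= T).

Lemma gasp_alphaP x :
  reflect (x < K \/ exists2 i, i < T & x = K * L + i %% r + K * (i %/ r))
          (x \in gasp_alpha K L T r).
Proof.
rewrite mem_cat mem_iota; apply: (iffP orP) => -[x_lt | x_in]; [by left | | by left |].
- by right; case/mapP: x_in => i; rewrite mem_iota => /andP[_ i_lt] ->; exists i.
- by right; case: x_in => i i_lt ->; apply: map_f; rewrite mem_iota.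
Qed.

Lemma gasp_betaP y :
  reflect ((exists2 s, s < L & y = K * s) \/ K * L <= y < K * L + T) (y \in gasp_beta K L T).
Proof.
rewrite mem_cat mem_iota; apply: (iffP orP) => -[y_in | y_range]; [| by right | | by right].
- by left; case/mapP: y_in => s; rewrite mem_iota => /andP[_ s_lt] ->; exists s.
- by left; case: y_in => s s_lt ->; apply: map_f; rewrite mem_iota.
Qed.

Lemma in_gasp_sumset_of_mem n :
  n \in sumset (gasp_alpha K L T r) (gasp_beta K L T) -> in_gasp_sumset K L T r n.
Proof.
rewrite mem_undup => /allpairsP[[x y] /= [/gasp_alphaP x_in /gasp_betaP y_in ->]].
rewrite /in_gasp_sumset.
case: x_in => [x_lt | [i i_lt ->]]; case: y_in => [[s s_lt ->] | y_range].
- have : K * s.+1 <= K * L by rewrite leq_mul2l s_lt orbT.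
  lia.
- lia.
- have ei : i = i %/ r * r + i %% r by rewrite -divn_eq.
  have a_lt : i %% r < r by rewrite ltn_pmod.
  move: (i %% r) (i %/ r) ei a_lt => a b ei a_lt.
  case: (ltnP (b + s) L) => bs_lt.
    have : K * (b + s).+1 <= K * L by rewrite leq_mul2l bs_lt orbT.
    have -> : K * L + a + K * b + K * s - K * L = (b + s) * K + a by lia.
    rewrite modnMDl modn_small //; lia.
  have bs_ge : K * L <= K * (b + s) by rewrite leq_mul2l bs_lt orbT.
  apply/orP; right; apply/orP; right; apply/andP; split; first lia.
  apply/in_tailP => //; exists ((b + s - L) * r + a), 0.
  have : (b + s - L) * r <= b * r by rewrite leq_mul2r; lia.
  have : K * (b + s - L) + K * L = K * b + K * s by rewrite -mulnDr subnK // mulnDr.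
  rewrite offset_divmod //; split; lia.
- apply/orP; right; apply/orP; right.
  rewrite (_ : 2 * (K * L) <= _) /=; last by move: (i %% r) (i %/ r) => a b; lia.
  apply/in_tailP => //; exists i, (y - K * L).
  by move: (i %% r) (i %/ r) => a b; split; lia.
Qed.

Lemma mem_of_in_gasp_sumset n :
  in_gasp_sumset K L T r n -> n \in sumset (gasp_alpha K L T r) (gasp_beta K L T).
Proof.
have sum_mem x y : x \in gasp_alpha K L T r -> y \in gasp_beta K L T -> n = x + y ->
    n \in sumset (gasp_alpha K L T r) (gasp_beta K L T).
  by move=> x_in y_in ->; rewrite mem_undup allpairs_f.
case/or3P=> [n_lt | /andP[/andP[n_ge n_lt] j_lt] | /andP[n_ge /in_tailP [] // i [u [i_lt u_lt e]]]].
- case: (ltnP n (K * L)) => [n_lt_KL | n_ge_KL].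
    apply: (sum_mem (n %% K) (K * (n %/ K))); last by rewrite addnC mulnC -divn_eq.
      by apply/gasp_alphaP; left; rewrite ltn_pmod.
    by apply/gasp_betaP; left; exists (n %/ K); rewrite // ltn_divLR // mulnC.
  case: (ltnP n (K * L + T)) => n_lt_T.
    apply: (sum_mem 0 n) => //; first by apply/gasp_alphaP; left.
    by apply/gasp_betaP; right; apply/andP.
  apply: (sum_mem (n - (K * L + T - 1)) (K * L + T - 1)); last lia.
    by apply/gasp_alphaP; left; lia.
  by apply/gasp_betaP; right; apply/andP; lia.
- set j := (n - K * L) %% K.
  have ej : n - K * L = (n - K * L) %/ K * K + j by rewrite -divn_eq.
  apply: (sum_mem (K * L + j) (K * ((n - K * L) %/ K))).
  + apply/gasp_alphaP; right; exists j; first lia.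
    by rewrite modn_small // divn_small // muln0 addn0.
  + apply/gasp_betaP; left; exists ((n - K * L) %/ K) => //.
    by rewrite ltn_divLR //; lia.
  + move: ej; move: ((n - K * L) %/ K) => t; lia.
- apply: (sum_mem (K * L + i %% r + K * (i %/ r)) (K * L + u)).
  + by apply/gasp_alphaP; right; exists i.
  + by apply/gasp_betaP; right; apply/andP; lia.
  + by move: e; move: (i %% r) (i %/ r) => a b; lia.
Qed.

Lemma mem_gasp_sumset n :
  (n \in sumset (gasp_alpha K L T r) (gasp_beta K L T)) = in_gasp_sumset K L T r n.
Proof. by apply/idP/idP; [exact: in_gasp_sumset_of_mem | exact: mem_of_in_gasp_sumset]. Qed.

Lemma size_gasp_sumset :
  size (sumset (gasp_alpha K L T r) (gasp_beta K L T)) =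
  K * L + count (fun m => (m < K + T - 1) || (m %% K < r)) (iota 0 (K * L))
  + ((T - 1) %/ r * minn (T - 1) (K - r) + (2 * T - 1)).
Proof.
have tail_ge : T <= tail_bound K T r by rewrite /tail_bound leq_addl.
have KL_ge : K <= K * L by rewrite leq_pmulr.
rewrite /sumset (size_undup_count _ (K * L + K * L + tail_bound K T r)); last first.
  apply/allP => n; rewrite -mem_undup => /in_gasp_sumset_of_mem.
  by rewrite /in_gasp_sumset /in_tail; case/or3P => [|/andP[] |/andP[_ /andP[]]]; lia.
have /eq_count-> : mem [seq x + y | x <- gasp_alpha K L T r, y <- gasp_beta K L T]
    =1 in_gasp_sumset K L T r.
  by move=> n; rewrite /= -mem_gasp_sumset mem_undup.
rewrite iotaD count_cat iotaD count_cat !add0n -count_in_tail //; congr (_ + _ + _).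
- by apply: count_iota_id => n /andP[_ n_lt]; apply/orP; left; lia.
- rewrite [LHS]count_iota_shift; apply: eq_in_count => m.
  rewrite mem_iota /in_gasp_sumset => /andP[_ m_lt].
  have -> : K * L + m < 2 * (K * L) by lia.
  have -> : 2 * (K * L) <= K * L + m = false by lia.
  by rewrite ltn_add2l addKn leq_addr orbF.
- rewrite [LHS]count_iota_shift; apply: eq_in_count => w.
  rewrite mem_iota add0n /in_gasp_sumset => /andP[_ w_lt].
  have -> : K * L + K * L + w - 2 * (K * L) = w by lia.
  have -> : K * L + K * L + w < 2 * (K * L) = false by lia.
  have -> : 2 * (K * L) <= K * L + K * L + w by lia.
  rewrite !andbF /=; apply: orb_idl => w_small.
  rewrite /in_tail w_lt; apply/orP; right.
  by apply: leq_ltn_trans (leq_mod _ _) _; lia.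
Qed.

End Sumset.

Section ClosedFormula.

Local Open Scope ring_scope.

Variables K L T r : nat.
Hypotheses (K_gt0 : (0 < K)%N) (T_gt0 : (0 < T)%N) (r_leK : (r <= K)%N).

Local Notation q := ((T - 1) %/ K)%N.
Local Notation mu := ((T - 1) %% K)%N.

Lemma natr_T_divmod : T%:R = q%:R * K%:R + mu%:R + 1 :> rat.
Proof. by rewrite -{1}(subnK T_gt0) natrD {1}(divn_eq (T - 1) K) natrD natrM. Qed.

Lemma natr_T_quotient : (T%:R - 1 - mu%:R) / K%:R = q%:R :> rat.
Proof. by rewrite natr_T_divmod; field; rewrite pnatr_eq0 -lt0n. Qed.

Lemma natr_min_T_K : Order.min (T%:R - 1) (K%:R - r%:R) = (minn (T - 1) (K - r))%:R :> rat.
Proof. by rewrite natr_min !natrB. Qed.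

Lemma gasp_N_large : (K * L <= K + T - 1)%N ->
  gasp_N K L T r = (2 * (K * L) + (2 * T - 1) + (T - 1) %/ r * minn (T - 1) (K - r))%:R.
Proof.
move=> KL_le; rewrite /gasp_N natr_min_T_K.
have KL_leR : K%:R * L%:R <= K%:R + T%:R - 1 :> rat.
  by rewrite -natrM -natrD -(natrB _ (_ : 1 <= K + T)%N) ?ler_nat; lia.
have r_leKR : r%:R <= K%:R :> rat by rewrite ler_nat.
have r_ge0 : 0 <= r%:R :> rat := ler0n _ _.
set phi := T%:R - 1 - _ + _.
have phi_ge : K%:R <= phi by rewrite /phi; lra.
rewrite max_r; last lra.
rewrite [Order.min r%:R _]min_r; last lra.
rewrite [Order.max 0 _]max_l; last lra.
rewrite ltNge (_ : r%:R <= phi) /=; last lra.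
rewrite mul0r subr0 mulr0 addr0.
rewrite !natrD !natrM (natrB _ (_ : 1 <= 2 * T)%N); last lia.
rewrite natrM /phi; lra.
Qed.

Lemma gasp_N_small : (K + T - 1 < K * L)%N ->
  gasp_N K L T r + (q.+1 * r + minn r mu)%:R
  = (K * L + (K + T - 1) + L * r + (2 * T - 1) + (T - 1) %/ r * minn (T - 1) (K - r))%:R.
Proof.
move=> KL_gt.
have L_ge : (q + 2 <= L)%N.
  have eT : (T - 1 = q * K + mu)%N := divn_eq _ _.
  by rewrite -ltnS -addn2 -(ltn_pmul2l K_gt0); lia.
have := natr_T_divmod.
have : L%:R = q%:R + 2 + (L - (q + 2))%:R :> rat by rewrite -{1}(subnKC L_ge) !natrD.
have := ltn_pmod (T - 1) K_gt0.
rewrite /gasp_N natr_min_T_K -[r%:R * _ / K%:R]mulrA natr_T_quotient.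
rewrite (_ : 2 * T - 1 = T + (T - 1))%N; last lia.
rewrite (_ : K + T - 1 = K + (T - 1))%N; last lia.
move: q mu (L - (q + 2))%N ((T - 1) %/ r)%N (minn (T - 1) (K - r)) => q mu d tl mn mu_lt eL eT.
rewrite !natrD !natrM (natrB _ T_gt0) eL eT.
have -> : q%:R * K%:R + mu%:R + 1 - 1 - K%:R * (q%:R + 2 + d%:R) + 2 * K%:R
          = mu%:R - K%:R * d%:R :> rat by ring.
have mu_ltR : mu%:R < K%:R :> rat by rewrite ltr_nat.
have r_leKR : r%:R <= K%:R :> rat by rewrite ler_nat.
have r_ge0 : 0 <= r%:R :> rat := ler0n _ _.
have mu_ge0 : 0 <= mu%:R :> rat := ler0n _ _.
have d_ge0 : 0 <= d%:R :> rat := ler0n _ _.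
have b_ge0 : 0 <= (mu == 0)%:R :> rat := ler0n _ _.
have b_le1 : (mu == 0)%:R <= 1 :> rat by rewrite -[1]/(1%:R) ler_nat leq_b1.
(* After T - 1 = q K + mu the quadratic part of the formula is
   -K (x - q) (x - q + 1) / 2 + (mu - max 0 phi) x - q mu, and x is q or q - 1 in every case. *)
case: (posnP d) => [-> | d_gt0].
  rewrite mulr0n mulr0 subr0 addr0 (max_l (ltW mu_ltR)) (max_r mu_ge0).
  rewrite [Order.min (_ - _) _]min_r; last lra.
  case: (ltnP mu r) => [mu_lt_r | r_le_mu].
    have mu_lt_rR : mu%:R < r%:R :> rat by rewrite ltr_nat.
    rewrite mu_lt_rR mul1r [Order.min r%:R _]min_r; last lra.
    rewrite max_r; last lra.
    by rewrite [Order.min 0 _]min_r; [field | lra].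
  have r_le_muR : r%:R <= mu%:R :> rat by rewrite ler_nat.
  rewrite ltNge r_le_muR mul0r subr0 [Order.min r%:R _]min_r; last lra.
  by rewrite max_l; [ring | lra].
have d_ge1 : 1 <= d%:R :> rat by rewrite ler1n.
have phi_lt0 : mu%:R - K%:R * d%:R < 0 :> rat.
  have : K%:R <= K%:R * d%:R :> rat by rewrite -natrM ler_nat leq_pmulr.
  lra.
rewrite ifT; last lra.
rewrite mul1r (max_l (x := K%:R)); last lra.
rewrite [Order.min r%:R _]min_l; last lra.
rewrite [Order.max 0 r%:R]max_r // [Order.max 0 _]max_l; last lra.
rewrite [Order.min (_ - _) _]min_l; last lra.
case: (posnP mu) => [mu0 | mu_gt0].
  by subst mu; rewrite minn0 (_ : true%:R = 1) // min_r; [field | lra].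
rewrite (_ : false%:R = 0) // subr0.
case: (ltnP mu r) => [mu_lt_r | r_le_mu].
  by rewrite min_r; [field | rewrite subr_le0 ler_nat ltnW].
by rewrite min_l; [field | rewrite subr_ge0 ler_nat].
Qed.

End ClosedFormula.

Local Open Scope ring_scope.

Theorem theorem1 (K L T r : nat) :
  (0 < K)%N -> (0 < L)%N -> (0 < T)%N -> (L <= K)%N ->
  (1 <= r)%N -> (r <= minn K T)%N ->
  (size (sumset (gasp_alpha K L T r) (gasp_beta K L T)))%:R = gasp_N K L T r.
Proof.
move=> K_gt0 L_gt0 T_gt0 _ r_gt0 r_le_min.
have [r_leK r_leT] : (r <= K)%N /\ (r <= T)%N by split; lia.
rewrite size_gasp_sumset //.
case: (leqP (K * L) (K + T - 1)) => [KL_le | KL_gt].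
  have -> : (count (fun m => (m < K + T - 1) || (m %% K < r)) (iota 0 (K * L)) = K * L)%N.
    by apply: count_iota_id => m /andP[_ m_lt]; apply/orP; left; lia.
  by rewrite gasp_N_large //; congr _%:R; lia.
set q := ((T - 1) %/ K)%N; set mu := ((T - 1) %% K)%N.
apply: (addIr (q.+1 * r + minn r mu)%:R); rewrite gasp_N_small // -natrD; congr _%:R.
have [c_div c_mod] : ((K + T - 1) %/ K = q.+1 /\ (K + T - 1) %% K = mu)%N.
  by rewrite -addnBA // modnDl divnDl ?dvdnn // divnn K_gt0.
have c_le : (K + T - 1 <= L * K)%N by rewrite mulnC ltnW.
have := @count_ltn_or_modn K L r _ K_gt0 r_leK c_le.
rewrite c_div c_mod mulnC; lia.
Qed.
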